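(* Consider the following setting. $\mathcal{G}$ is a connected undirected graph with nodes $\{1,\dots,n\}$, edges $\{1,\dots,m\}$ and incidence matrix $B\in\mathbb{R}^{n\times m}$; $p\ge1$ and $E=\begin{bmatrix} I_{p}\\ \mathbf{0}_{(n-p)\times p}\end{bmatrix}$. Let $T_x\in\mathbb{R}^{n\times n}$, $T_\mu,T_\xi\in\mathbb{R}^{m\times m}$, $T_\theta,T_\phi\in\mathbb{R}^{p\times p}$ be diagonal with strictly positive diagonal entries, $d\in\mathbb{R}^n$ a constant vector, $h(x)=(h_1(x_1),\dots,h_n(x_n))^T$ with each $h_i:\mathbb{R}\to\mathbb{R}$ continuously differentiable and strictly increasing, and $\overline y\in\mathbb{R}^n$ with $\overline y_i\in\mathcal{R}(h_i)$ for all $i$. Let $f(\mu)=(f_1(\mu_1),\dots,f_m(\mu_m))^T$ and $g(\theta)=(g_1(\theta_1),\dots,g_p(\theta_p))^T$ with $f_k,g_i:\mathbb{R}\to\mathbb{R}$. Let $Q=\operatorname{diag}(q_1,\dots,q_p)$, $q_i>0$, $r\in\mathbb{R}^p$, and let $L^{com}\in\mathbb{R}^{p\times p}$ be the Laplacian matrix of a weighted directed graph on $\{1,\dots,p\}$ that is balanced and strongly connected. Define $\overline u=Q^{-1}(\kappa-r)$ with $\kappa=E^T\frac{\mathbb{1}_n\mathbb{1}_n^T}{\mathbb{1}_p^TQ^{-1}\mathbb{1}_p}(d+EQ^{-1}r)$, and assume that there exists $\omega\in\mathbb{R}^m$ with $[B^\dagger(E\overline u-d)+(I-B^\dagger B)\omega]_k\in\mathcal{R}(f_k)$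 for all $k$, and that $\overline u_i\in\mathcal{R}(g_i)$ for all $i\in\{1,\dots,p\}$. Consider the closed-loop system $$\begin{aligned} T_x\dot x&=-Bf(\mu)+Eg(\theta)-d,\\ T_\mu\dot\mu&=B^T(h(x)-\overline y)-(f(\mu)-\xi),\\ T_\xi\dot\xi&=f(\mu)-\xi,\\ T_\theta\dot\theta&=-E^T(h(x)-\overline y)-(g(\theta)-\phi),\\ T_\phi\dot\phi&=g(\theta)-\phi-QL^{com}(Q\phi+r), \end{aligned}$$ with state $(x,\mu,\xi,\theta,\phi)\in\mathbb{R}^n\times\mathbb{R}^m\times\mathbb{R}^m\times\mathbb{R}^p\times\mathbb{R}^p$. Then this system has an equilibrium $(\overline x,\overline\mu,\overline\xi,\overline\theta,\overline\phi)$, and every equilibrium satisfies $h(\overline x)=\overline y$ and $g(\overline\theta)=\overline u$.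
   Context: $\mathcal{R}(f)$ denotes the range of a function $f$; $B^\dagger$ is the Moore–Penrose pseudoinverse of $B$; $\mathbb{1}_k$ is the all-ones vector of length $k$. The incidence matrix $B$ is obtained by arbitrarily orienting each edge: $b_{ik}=+1$ if node $i$ is the positive end of edge $k$, $-1$ if the negative end, $0$ otherwise. A weighted directed graph is balanced if at every node the weighted in-degree equals the weighted out-degree; its Laplacian is $L^{com}=D-A$ with $A$ the weighted adjacency matrix and $D$ the diagonal matrix of weighted out-degrees. The vector $\overline u$ is the minimizer of $\frac12u^TQu+r^Tu$ subject to $\mathbf{0}=-B\lambda+Eu-d$. *)

From HB Require Import structures.
From mathcomp Require Import all_boot all_order all_algebra.
From mathcomp Require Import all_classical all_reals all_analysis.
Set Implicit Arguments. Unset Strict Implicit. Unset Printing Implicit Defensive.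
Import Order.TTheory GRing.Theory Num.Theory.
Local Open Scope ring_scope.

Section Defs.
Variable R : realType.

Definition incidence (n m : nat) (src tgt : 'I_m -> 'I_n) : 'M[R]_(n, m) :=
  \matrix_(i, k) ((i == src k)%:R - (i == tgt k)%:R).

Definition uadj (n m : nat) (src tgt : 'I_m -> 'I_n) : rel 'I_n :=
  fun i j => [exists k, ((src k == i) && (tgt k == j)) || ((src k == j) && (tgt k == i))].

Definition simple_connected_graph (n m : nat) (src tgt : 'I_m -> 'I_n) : Prop :=
  (forall k, src k != tgt k) /\
  (forall k l, (src k == src l) && (tgt k == tgt l) || (src k == tgt l) && (tgt k == src l)
     -> k = l) /\
  (forall i j, connect (uadj src tgt) i j).

Definition is_pinv (n m : nat) (B : 'M[R]_(n, m)) (Bd : 'M[R]_(m, n)) : Prop :=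
  [/\ B *m Bd *m B = B, Bd *m B *m Bd = Bd,
      (B *m Bd)^T = B *m Bd & (Bd *m B)^T = Bd *m B].

Definition is_diag_pos (k : nat) (T : 'M[R]_k) : Prop :=
  (forall i j, i != j -> T i j = 0) /\ (forall i, 0 < T i i).

(* E = [I_p ; 0_{(n-p) x p}] *)
Definition Emat (n p : nat) : 'M[R]_(n, p) := \matrix_(i, j) ((i == j :> nat)%:R).

Definition laplacian (p : nat) (A : 'M[R]_p) : 'M[R]_p :=
  diag_mx (\row_i (\sum_j A i j)) - A.

Definition balanced_strongly_connected (p : nat) (A : 'M[R]_p) : Prop :=
  [/\ (forall i j, 0 <= A i j), (forall i, A i i = 0),
      (forall i, \sum_j A i j = \sum_j A j i) &
      (forall i j, connect (fun a b => 0 < A a b) i j)].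

Definition in_range (f : R -> R) (y : R) : Prop := exists z, f z = y.

Definition vmap (k : nat) (F : 'I_k -> R -> R) (v : 'cV[R]_k) : 'cV[R]_k :=
  \col_i F i (v i 0).

Definition ones (k : nat) : 'cV[R]_k := const_mx 1.

Definition kappa (n p : nat) (Q : 'M[R]_p) (r : 'cV[R]_p) (d : 'cV[R]_n) : 'cV[R]_p :=
  ((((ones p)^T *m invmx Q *m ones p) 0 0)^-1) *:
    ((Emat n p)^T *m (ones n *m (ones n)^T) *m (d + Emat n p *m invmx Q *m r)).

Definition ubar (n p : nat) (Q : 'M[R]_p) (r : 'cV[R]_p) (d : 'cV[R]_n) : 'cV[R]_p :=
  invmx Q *m (kappa Q r d - r).

Definition is_equilibrium (n m p : nat) (B : 'M[R]_(n, m))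
  (Tx : 'M[R]_n) (Tmu Txi : 'M[R]_m) (Ttheta Tphi : 'M[R]_p)
  (d : 'cV[R]_n) (h : 'I_n -> R -> R) (ybar : 'cV[R]_n)
  (f : 'I_m -> R -> R) (g : 'I_p -> R -> R) (Q Lcom : 'M[R]_p) (r : 'cV[R]_p)
  (x : 'cV[R]_n) (mu xi : 'cV[R]_m) (theta phi : 'cV[R]_p) : Prop :=
  let E := Emat n p in
  [/\ Tx *m 0 = - B *m vmap f mu + E *m vmap g theta - d,
      Tmu *m 0 = B^T *m (vmap h x - ybar) - (vmap f mu - xi),
      Txi *m 0 = vmap f mu - xi,
      Ttheta *m 0 = - E^T *m (vmap h x - ybar) - (vmap g theta - phi) &
      Tphi *m 0 = vmap g theta - phi - Q *m Lcom *m (Q *m phi + r)].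

End Defs.

From HB Require Import structures.
From mathcomp Require Import all_boot all_order all_algebra.
From mathcomp Require Import all_classical all_reals all_analysis.
Set Implicit Arguments. Unset Strict Implicit. Unset Printing Implicit Defensive.
Import Order.TTheory GRing.Theory Num.Theory numFieldNormedType.Exports.
Local Open Scope ring_scope.

(* At an equilibrium the [mu]- and [xi]-equations give [B^T (h x - ybar) = 0],
   so [h x - ybar = c 1] because the graph is connected.  The [theta]-equation
   turns this into [g theta - phi = - c 1] and the [phi]-equation into
   [L (Q phi + r) = - c Q^-1 1]; the columns of the Laplacian of a balanced
   graph sum to zero, hence [c = 0].  Then [g theta = phi] and
   [L (Q phi + r) = 0], so by the maximum principle on the strongly connected
   graph [Q phi + r = a 1].  Summing the [x]-equation, in which [B f mu] has
   zero sum, gives [1^T phi = 1^T d], which pins [a] to the level of [kappa],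
   i.e. [phi = ubar].  Conversely [phi = g theta = ubar], [h x = ybar] and
   [f mu = B^+ (E ubar - d) + (I - B^+ B) w] is an equilibrium, because
   [B B^+] fixes every zero-sum vector. *)

Lemma sum_indicator_mul (R : pzSemiRingType) (T : finType) (s : T) (F : T -> R) :
  \sum_i (i == s)%:R * F i = F s.
Proof.
under eq_bigr do rewrite mulr_natl mulrb.
by rewrite -big_mkcond big_pred1_eq.
Qed.

Section VectorMap.
Variables (R : realType) (k : nat) (F : 'I_k -> R -> R).

Lemma vmap_preimage (v : 'cV[R]_k) :
  (forall i, in_range (F i) (v i 0)) -> exists u, vmap F u = v.
Proof.
move=> /choice [u Fu]; exists (\col_i u i).
by apply/matrixP => i j; rewrite (ord1 j) !mxE.
Qed.

End VectorMap.

Section Incidence.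
Variables (R : realType) (n m : nat) (src tgt : 'I_m -> 'I_n).
Local Notation B := (incidence R src tgt).

Lemma trmx_incidence_mulE l (X : 'M[R]_(n, l)) k j :
  (B^T *m X) k j = X (src k) j - X (tgt k) j.
Proof.
rewrite mxE; under eq_bigr do rewrite !mxE mulrBl.
by rewrite sumrB !sum_indicator_mul.
Qed.

Lemma sum_incidence_mul (u : 'cV[R]_m) : \sum_i (B *m u) i 0 = 0.
Proof.
under eq_bigr do rewrite mxE.
rewrite exchange_big /= big1 // => k _.
under eq_bigr do rewrite !mxE mulrBl.
by rewrite sumrB (sum_indicator_mul _ (fun=> u k 0)) sum_indicator_mul subrr.
Qed.

Hypothesis connected : forall i j, connect (uadj src tgt) i j.

Lemma incidence_trmx_mul_eq0 l (X : 'M[R]_(n, l)) :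
  B^T *m X = 0 -> forall i i' j, X i j = X i' j.
Proof.
move=> BX0 i i' j.
have edgeE k : X (src k) j = X (tgt k) j.
  by apply: subr0_eq; rewrite -trmx_incidence_mulE BX0 mxE.
have /connectP [s walk ->] := connected i i'.
elim: s i walk => [|a s IHs] i //= /andP [/existsP [k ik] walk].
rewrite -IHs //.
by case/orP: ik => /andP [/eqP <- /eqP <-]; rewrite edgeE.
Qed.

(* [B B^+] is the orthogonal projection onto the range of [B], and the range
   of the incidence matrix of a connected graph is the orthogonal complement
   of the all-ones vector. *)
Lemma incidence_mul_pinv (Bd : 'M[R]_(m, n)) (v : 'cV[R]_n) :
  is_pinv B Bd -> \sum_i v i 0 = 0 -> B *m (Bd *m v) = v.
Proof.
move=> [BBdB _ BBd_sym _] sum_v0.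
pose X : 'M[R]_n := 1%:M - B *m Bd.
have X_sym : X^T = X by rewrite /X linearB /= trmx1 BBd_sym.
have BX0 : B^T *m X = 0.
  by rewrite /X mulmxBr mulmx1 -BBd_sym -trmx_mul BBdB subrr.
have X_row i j : X i j = X i i.
  have -> : X i j = X^T j i by rewrite [RHS]mxE.
  by rewrite X_sym (incidence_trmx_mul_eq0 BX0 j i i).
have Xv0 : X *m v = 0.
  apply/matrixP => i k; rewrite (ord1 k) !mxE.
  under eq_bigr do rewrite X_row.
  by rewrite -mulr_sumr sum_v0 mulr0.
by apply/esym/subr0_eq; rewrite mulmxA -[v in v - _]mul1mx -mulmxBl.
Qed.

Lemma incidence_mul_pinv_sol (Bd : 'M[R]_(m, n)) (v : 'cV[R]_n) (w : 'cV[R]_m) :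
  is_pinv B Bd -> \sum_i v i 0 = 0 ->
  B *m (Bd *m v + (1%:M - Bd *m B) *m w) = v.
Proof.
move=> Bd_pinv sum_v0; have [BBdB _ _ _] := Bd_pinv.
rewrite mulmxDr incidence_mul_pinv // mulmxA mulmxBr mulmx1 mulmxA BBdB.
by rewrite subrr mul0mx addr0.
Qed.

End Incidence.

Section Laplacian.
Variables (R : realType) (p : nat) (A : 'M[R]_p).

Lemma laplacian_mulE (w : 'cV[R]_p) i :
  (laplacian A *m w) i 0 = \sum_k A i k * (w i 0 - w k 0).
Proof.
rewrite mxE; under eq_bigr do rewrite !mxE mulrBl mulrnAl eq_sym mulrb.
rewrite sumrB -big_mkcond big_pred1_eq mulr_suml -sumrB.
by under eq_bigr do rewrite -mulrBr.
Qed.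

Lemma laplacian_mul_const (c : R) : laplacian A *m (const_mx c : 'cV_p) = 0.
Proof.
apply/matrixP => i k; rewrite (ord1 k) laplacian_mulE [RHS]mxE big1 // => j _.
by rewrite !mxE subrr mulr0.
Qed.

Lemma sum_laplacian_mul (w : 'cV[R]_p) :
  (forall i, \sum_j A i j = \sum_j A j i) -> \sum_i (laplacian A *m w) i 0 = 0.
Proof.
move=> balanced.
under eq_bigr do rewrite laplacian_mulE (eq_bigr _ (fun k _ => mulrBr _ _ _)) sumrB.
apply/eqP; rewrite sumrB subr_eq0; apply/eqP; rewrite [RHS]exchange_big /=.
by apply: eq_bigr => i _; rewrite -!mulr_suml balanced.
Qed.

Hypothesis A_ge0 : forall i j, 0 <= A i j.
Hypothesis strongly_connected : forall i j, connect (fun a b => 0 < A a b) i j.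

(* Maximum principle: at a maximal entry of [w], the row [(L w)_a = 0] is a
   sum of nonnegative terms, so every out-neighbour of [a] is maximal too. *)
Lemma laplacian_mul_eq0_max (w : 'cV[R]_p) a b :
  (laplacian A *m w) a 0 = 0 -> (forall k, w k 0 <= w a 0) -> 0 < A a b ->
  w b 0 = w a 0.
Proof.
rewrite laplacian_mulE => Lw0 w_max Aab.
have terms_ge0 k : predT k -> 0 <= A a k * (w a 0 - w k 0).
  by move=> _; rewrite mulr_ge0 // subr_ge0.
have /eqP := psumr_eq0P terms_ge0 Lw0 (i := b) isT.
by rewrite mulf_eq0 gt_eqF //= subr_eq0 => /eqP.
Qed.

Lemma laplacian_mul_eq0 (w : 'cV[R]_p) :
  laplacian A *m w = 0 -> forall i j, w i 0 = w j 0.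
Proof.
move=> Lw0 i j; pose M := [arg max_(k > i) w k 0]%O.
have w_max k : w k 0 <= w M 0 by rewrite /M; case: arg_maxP => // a _; apply.
have max_closed c s : w c 0 = w M 0 -> path (fun a b => 0 < A a b) c s ->
    w (last c s) 0 = w M 0.
  elim: s c => [|a s IHs] c //= wc /andP [ca walk]; apply: IHs walk.
  rewrite -wc; apply: (laplacian_mul_eq0_max (a := c)) => //.
    by rewrite Lw0 mxE.
  by move=> l; rewrite wc.
suff w_eqM k : w k 0 = w M 0 by rewrite !w_eqM.
have /connectP [s walk ->] := strongly_connected M k.
exact: max_closed walk.
Qed.

End Laplacian.

Section Emat.
Variables (R : realType) (n p : nat).
Hypothesis p_le_n : (p <= n)%N.
Local Notation E := (Emat R n p).

Lemma trmx_Emat_mulE l (M : 'M[R]_(n, l)) j k :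
  (E^T *m M) j k = M (widen_ord p_le_n j) k.
Proof.
rewrite mxE -(sum_indicator_mul _ (fun i => M i k)); apply: eq_bigr => i _.
by rewrite !mxE.
Qed.

Lemma sum_Emat_mul (v : 'cV[R]_p) : \sum_i (E *m v) i 0 = \sum_j v j 0.
Proof.
under eq_bigr do rewrite mxE.
rewrite exchange_big /=; apply: eq_bigr => j _.
under eq_bigr do rewrite mxE.
exact: (sum_indicator_mul (widen_ord p_le_n j) (fun=> v j 0)).
Qed.

Lemma sum_Emat_mulB (v : 'cV[R]_p) (u : 'cV[R]_n) :
  \sum_i (E *m v - u) i 0 = \sum_j v j 0 - \sum_i u i 0.
Proof.
under eq_bigr do rewrite mxE [(- u) _ _]mxE.
by rewrite sumrB sum_Emat_mul.
Qed.

End Emat.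

Section Consensus.
Variables (R : realType) (n p : nat) (q : 'rV[R]_p) (r : 'cV[R]_p) (d : 'cV[R]_n).
Hypothesis q_gt0 : forall j, 0 < q 0 j.
Local Notation Q := (diag_mx q).

Definition kappa_level : R :=
  (\sum_i d i 0 + \sum_j r j 0 / q 0 j) / \sum_j (q 0 j)^-1.

Lemma diag_pos_unitmx : Q \in unitmx.
Proof. by rewrite unitmxE det_diag unitfE; apply/lt0r_neq0/prodr_gt0. Qed.

Lemma invmx_diag_mulE (v : 'cV[R]_p) j : (invmx Q *m v) j 0 = v j 0 / q 0 j.
Proof.
have := congr1 (fun M : 'cV[R]_p => M j 0) (mulKVmx diag_pos_unitmx v).
rewrite /= mul_diag_mx mxE => <-.
by rewrite mulrAC divff ?lt0r_neq0 // mul1r.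
Qed.

Lemma sum_invmx_diag_shift (a : R) :
  \sum_j (invmx Q *m (const_mx a - r)) j 0 =
  a * \sum_j (q 0 j)^-1 - \sum_j r j 0 / q 0 j.
Proof.
under eq_bigr do rewrite invmx_diag_mulE !mxE mulrBl.
by rewrite sumrB mulr_sumr.
Qed.

Hypothesis p_le_n : (p <= n)%N.

Lemma kappaE : kappa Q r d = const_mx kappa_level.
Proof.
have sum_invQ : ((ones R p)^T *m invmx Q *m ones R p) 0 0 = \sum_j (q 0 j)^-1.
  rewrite -mulmxA mxE; apply: eq_bigr => j _.
  by rewrite invmx_diag_mulE !mxE mul1r div1r.
have J_entry a b : ((Emat R n p)^T *m (ones R n *m (ones R n)^T)) a b = 1.
  by rewrite trmx_Emat_mulE !mxE big_ord1 !mxE mulr1.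
apply/matrixP => j k; rewrite /kappa sum_invQ !mxE mulrC /kappa_level (ord1 k).
congr (_ / _); under eq_bigr do rewrite J_entry mul1r mxE.
rewrite big_split /= -mulmxA (sum_Emat_mul p_le_n); congr (_ + _).
by apply: eq_bigr => i _; rewrite invmx_diag_mulE.
Qed.

Hypothesis p_gt0 : (0 < p)%N.

Lemma sum_inv_gt0 : 0 < \sum_j (q 0 j)^-1.
Proof.
rewrite (bigD1 (Ordinal p_gt0)) //= ltr_pwDl ?invr_gt0 //.
by rewrite sumr_ge0 // => j _; rewrite invr_ge0 ltW.
Qed.

Lemma sum_ubar : \sum_j ubar Q r d j 0 = \sum_i d i 0.
Proof.
rewrite /ubar kappaE sum_invmx_diag_shift /kappa_level.
by rewrite divfK ?addrK // lt0r_neq0 // sum_inv_gt0.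
Qed.

Lemma ubar_unique (a : R) :
  \sum_j (invmx Q *m (const_mx a - r)) j 0 = \sum_i d i 0 ->
  invmx Q *m (const_mx a - r) = ubar Q r d.
Proof.
rewrite -sum_ubar /ubar kappaE !sum_invmx_diag_shift.
by move=> /addIr /(mulIf (lt0r_neq0 sum_inv_gt0)) ->.
Qed.

End Consensus.

Section Equilibrium.
Variables (R : realType) (n m p : nat) (src tgt : 'I_m -> 'I_n)
  (Tx : 'M[R]_n) (Tmu Txi : 'M[R]_m) (Ttheta Tphi : 'M[R]_p)
  (d : 'cV[R]_n) (h : 'I_n -> R -> R) (ybar : 'cV[R]_n)
  (f : 'I_m -> R -> R) (g : 'I_p -> R -> R)
  (q : 'rV[R]_p) (r : 'cV[R]_p) (A : 'M[R]_p).
Hypothesis connected : forall i j, connect (uadj src tgt) i j.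
Hypotheses (p_gt0 : (0 < p)%N) (p_le_n : (p <= n)%N).
Hypothesis q_gt0 : forall j, 0 < q 0 j.
Local Notation B := (incidence R src tgt).
Local Notation E := (Emat R n p).
Local Notation Q := (diag_mx q).
Local Notation ub := (ubar Q r d).
Local Notation equilibrium :=
  (is_equilibrium B Tx Tmu Txi Ttheta Tphi d h ybar f g Q (laplacian A) r).

Lemma equilibrium_exists (Bd : 'M[R]_(m, n)) (w : 'cV[R]_m) :
  is_pinv B Bd ->
  (forall k,
     in_range (f k) ((Bd *m (E *m ub - d) + (1%:M - Bd *m B) *m w) k 0)) ->
  (forall i, in_range (h i) (ybar i 0)) ->
  (forall i, in_range (g i) (ub i 0)) ->
  exists x mu xi theta phi, equilibrium x mu xi theta phi.
Proof.
move=> Bd_pinv /vmap_preimage [mu fmu] /vmap_preimage [x hx].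
move=> /vmap_preimage [theta gtheta].
have sum_v0 : \sum_i (E *m ub - d) i 0 = 0.
  by rewrite (sum_Emat_mulB p_le_n) sum_ubar ?subrr.
have L_kappa : laplacian A *m (Q *m ub + r) = 0.
  by rewrite /ubar mulKVmx ?diag_pos_unitmx // subrK kappaE // laplacian_mul_const.
exists x, mu, (vmap f mu), theta, ub.
rewrite /is_equilibrium !mulmx0 hx fmu gtheta !subrr !mulmx0 -mulmxA L_kappa.
split; rewrite ?mulmx0 ?subrr ?oppr0 //.
by rewrite mulNmx incidence_mul_pinv_sol // opprB subrK subrr.
Qed.

Hypothesis balanced : forall i, \sum_j A i j = \sum_j A j i.

Lemma equilibrium_output_regulated x mu xi theta phi :
  equilibrium x mu xi theta phi -> vmap h x = ybar.
Proof.
move=> [_ e_mu e_xi e_theta e_phi]; rewrite !mulmx0 in e_mu e_xi e_theta e_phi.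
pose y := vmap h x - ybar; pose c := y (widen_ord p_le_n (Ordinal p_gt0)) 0.
have By0 : B^T *m y = 0.
  by move: e_mu; rewrite -(subr0_eq (esym e_xi)) subrr subr0.
have y_const i : y i 0 = c := incidence_trmx_mul_eq0 connected By0 i _ 0.
have Lz j : (laplacian A *m (Q *m phi + r)) j 0 = - c / q 0 j.
  have := congr1 (fun v : 'cV_p => v j 0)
    (etrans (subr0_eq (esym e_theta)) (subr0_eq (esym e_phi))).
  rewrite /= mulNmx mxE (trmx_Emat_mulE p_le_n) y_const -mulmxA mul_diag_mx mxE.
  by move=> ->; rewrite mulrAC divff ?lt0r_neq0 // mul1r.
have c0 : c = 0.
  have := sum_laplacian_mul (Q *m phi + r) balanced.
  under eq_bigr do rewrite Lz.
  rewrite -mulr_sumr => /eqP.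
  by rewrite mulf_eq0 (gt_eqF (sum_inv_gt0 q_gt0 p_gt0)) orbF oppr_eq0 => /eqP.
apply/eqP; rewrite -subr_eq0 -/y; apply/eqP/matrixP => i k.
by rewrite (ord1 k) y_const c0 mxE.
Qed.

Hypothesis A_ge0 : forall i j, 0 <= A i j.
Hypothesis strongly_connected : forall i j, connect (fun a b => 0 < A a b) i j.

Lemma equilibrium_input_optimal x mu xi theta phi :
  equilibrium x mu xi theta phi -> vmap g theta = ub.
Proof.
move=> equil; have hx := equilibrium_output_regulated equil.
move: equil => [e_x _ _ e_theta e_phi]; rewrite !mulmx0 in e_x e_theta e_phi.
have g_phi : vmap g theta = phi.
  apply/subr0_eq/eqP; rewrite -oppr_eq0 -sub0r.
  by move: e_theta; rewrite hx subrr mulmx0 => <-.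
have Lz0 : laplacian A *m (Q *m phi + r) = 0.
  have := congr1 (mulmx (invmx Q)) e_phi.
  rewrite g_phi subrr sub0r mulmxN -mulmxA mulKmx ?diag_pos_unitmx // mulmx0.
  by move=> /esym/eqP; rewrite oppr_eq0 => /eqP.
pose a := (Q *m phi + r) (Ordinal p_gt0) 0.
have phiE : phi = invmx Q *m (const_mx a - r).
  have z_const : Q *m phi + r = const_mx a.
    apply/matrixP => j k; rewrite (ord1 k) [RHS]mxE.
    exact: (laplacian_mul_eq0 A_ge0 strongly_connected Lz0).
  by rewrite -z_const addrK mulKmx ?diag_pos_unitmx.
rewrite g_phi phiE; apply: ubar_unique => //; rewrite -phiE.
move: e_x; rewrite mulNmx -addrA addrC g_phi => /esym/subr0_eq.
move=> /(congr1 (fun v : 'cV_n => \sum_i v i 0)).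
by rewrite (sum_Emat_mulB p_le_n) sum_incidence_mul => /subr0_eq.
Qed.

End Equilibrium.

Theorem lemma5 (R : realType) (n m p : nat) (src tgt : 'I_m -> 'I_n)
  (Bd : 'M[R]_(m, n))
  (Tx : 'M[R]_n) (Tmu Txi : 'M[R]_m) (Ttheta Tphi : 'M[R]_p)
  (d : 'cV[R]_n) (h : 'I_n -> R -> R) (ybar : 'cV[R]_n)
  (f : 'I_m -> R -> R) (g : 'I_p -> R -> R)
  (q : 'rV[R]_p) (r : 'cV[R]_p) (A : 'M[R]_p) :
  simple_connected_graph src tgt ->
  (1 <= p)%N -> (p <= n)%N ->
  is_pinv (incidence R src tgt) Bd ->
  is_diag_pos Tx -> is_diag_pos Tmu -> is_diag_pos Txi ->
  is_diag_pos Ttheta -> is_diag_pos Tphi ->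
  (forall i (x : R), derivable (h i) x 1) ->
  (forall i, continuous (derive1 (h i))) ->
  (forall i, {homo h i : a b / a < b}) ->
  (forall i, in_range (h i) (ybar i 0)) ->
  (forall i, 0 < q 0 i) ->
  balanced_strongly_connected A ->
  let B := incidence R src tgt in
  let E := Emat R n p in
  let Q := diag_mx q in
  let ub := ubar Q r d in
  (exists w : 'cV[R]_m, forall k,
      in_range (f k) ((Bd *m (E *m ub - d) + (1%:M - Bd *m B) *m w) k 0)) ->
  (forall i, in_range (g i) (ub i 0)) ->
  (exists x mu xi theta phi,
     is_equilibrium B Tx Tmu Txi Ttheta Tphi d h ybar f g Q (laplacian A) r
       x mu xi theta phi) /\
  (forall x mu xi theta phi,
     is_equilibrium B Tx Tmu Txi Ttheta Tphi d h ybar f g Q (laplacian A) r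
       x mu xi theta phi ->
     vmap h x = ybar /\ vmap g theta = ub).
Proof.
move=> [_ [_ connected]] p_gt0 p_le_n Bd_pinv _ _ _ _ _ _ _ _ ybar_range q_gt0.
move=> [A_ge0 _ balanced strongly_connected] B E Q ub [w f_range] g_range.
(* The time constants and the regularity and monotonicity of [h] only matter
   for stability; the equilibria do not depend on them. *)
split.
  exact: (equilibrium_exists _ _ _ _ _ _ connected p_gt0 p_le_n q_gt0 Bd_pinv
            f_range ybar_range g_range).
move=> x mu xi theta phi equil; split.
  exact: (equilibrium_output_regulated connected p_gt0 p_le_n q_gt0 balanced equil).
exact: (equilibrium_input_optimal connected p_gt0 p_le_n q_gt0 balanced A_ge0
          strongly_connected equil).
Qed.
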